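(* There is $n_0$ such that the following holds for every $n\ge n_0$. Let $t\ge1$, let $F$ be an $n$-vertex graph, and suppose there is a partition $V(F)=U\cup V$ with $|U|=\lfloor n/2\rfloor$ and $\left|e_F(U,V)-\frac{e(F)}{2}\right|\ge t$. Let $\gamma\in(0,1)$, let $G$ be a subgraph of $K_n$ (on the vertex set of $K_n$), and suppose there is a partition $V(G)=X\cup Y$ with $|X|=\lfloor n/2\rfloor$ and $\left|e_G(X,Y)-\frac12|X||Y|\right|\ge\gamma n^2$. Suppose that $\gamma t\ge\frac{10e(F)}{n}$. Then there is a copy $F_0$ of $F$ in $K_n$ with $\left||E(F_0)\cap E(G)|-\frac{e(F)}{2}\right|\ge0.5\gamma t$.
   Context: $e_F(U,V)$ denotes the number of edges of $F$ with one endpoint in $U$ and the other in $V$; $e(F)=|E(F)|$. A copy of $F$ in $K_n$ is a subgraph of $K_n$ isomorphic to $F$. *)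

From Stdlib Require Import Reals.
From mathcomp Require Import all_boot all_fingroup.

Set Implicit Arguments.
Unset Strict Implicit.
Unset Printing Implicit Defensive.

Definition is_graph (n : nat) (E : {set {set 'I_n}}) : Prop :=
  forall e, e \in E -> #|e| = 2%N.

Definition eUV (n : nat) (E : {set {set 'I_n}}) (U V : {set 'I_n}) : nat :=
  #|[set e in E | [exists x in U, exists y in V, e == [set x; y]]]|.

Definition is_copy (n : nat) (F F0 : {set {set 'I_n}}) : Prop :=
  exists s : {perm 'I_n}, F0 = [set (fun x => s x) @: e | e : {set 'I_n} in F].

(* Averaging over relabellings.  For |W| = |Z|, a uniformly random permutation s with
   s(W) = Z sends a pair meeting W in i points to a uniformly random pair meeting Z in i
   points, so the mean number of edges e of F with s(e) in G is [mean_hits F G W Z], the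
   sum over i of |F :&: pairs_meeting W i| times the density of G on [pairs_meeting Z i];
   some s deviates from e(F)/2 at least as much as this mean.
   Three means are compared: W = Z = V, (W, Z) = (U, X), and (W, Z) = (V \ U, X) with a
   vertex of low degree removed from V \ U when n is odd; the last one exchanges the
   roles of the two sides of U at a cost O(e(F)/n).  Let p be the deviation from 1/2 of
   the density of G across X (|p| >= 4 gamma) and q the mean deviation of its two inner
   densities.  The first mean is about e(F)/2 + e(F)(p + q)/2, and the average of the
   other two is about that plus (e_F(U, V) - e(F)/2)(p - q).  If |p - q| < |p|/2 the first
   mean is far from e(F)/2; otherwise it differs from the average of the other two by at
   least 2 gamma t, so one of the three is far. *)

From Stdlib Require Import Reals Lra.
From mathcomp Require Import all_boot all_fingroup zify.

Set Implicit Arguments.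
Unset Strict Implicit.
Unset Printing Implicit Defensive.

Section PermImage.
Variable T : finType.
Implicit Types (A B S Z : {set T}) (s t : {perm T}).

Lemma imset_permM s t A : (s * t)%g @: A = t @: (s @: A).
Proof. by rewrite -imset_comp; apply: eq_imset => x; rewrite /= permM. Qed.

Lemma imset_perm_out S s A : perm_on S s -> A \subset ~: S -> s @: A = A.
Proof.
move=> sS /subsetP AS; rewrite -[RHS]imset_id; apply: eq_in_imset => x /AS.
by rewrite inE; apply: out_perm.
Qed.

Lemma exists_perm_on_imset S A B : A \subset S -> B \subset S -> #|A| = #|B| ->
  exists2 s, perm_on S s & s @: A = B.
Proof.
move: {2}#|A :\: B| (leqnn #|A :\: B|) => m.
elim: m A => [|m IH] A leAB AS BS cardAB.
  exists 1%g; first exact: perm_on1.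
  rewrite imset_perm1; apply/eqP; rewrite eqEcard cardAB leqnn andbT.
  by rewrite -setD_eq0 -cards_eq0 -leqn0.
have [AB|/subsetPn[w wA wB]] := boolP (A \subset B).
  exists 1%g; first exact: perm_on1.
  by rewrite imset_perm1; apply/eqP; rewrite eqEcard AB cardAB leqnn.
have [z zB zA] : exists2 z, z \in B & z \notin A.
  apply/subsetPn; apply: contra wB => BA.
  by have /eqP-> : B == A by rewrite eqEcard BA cardAB leqnn.
pose A' := tperm w z @: A.
have onS : perm_on S (tperm w z).
  apply: subset_trans (tperm_on w z) _.
  by rewrite subUset !sub1set (subsetP AS) ?(subsetP BS).
have leA'B : #|A' :\: B| <= m.
  suff sub : A' :\: B \subset (A :\: B) :\ w.
    have := cardsD1 w (A :\: B); rewrite !inE wA wB /= => e.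
    have := subset_leq_card sub; lia.
  apply/subsetP => _ /setDP[/imsetP[x xA ->] xB]; rewrite !inE.
  move: xB; case: tpermP => [_ | xz | xw xz]; first by rewrite zB.
    by move: xA; rewrite xz (negbTE zA).
  by move=> xB; apply/and3P; split => //; apply/eqP.
have A'S : A' \subset S.
  by apply/subsetP => _ /imsetP[x xA ->]; rewrite (perm_closed _ onS) (subsetP AS).
have [s sS sA'] := IH A' leA'B A'S BS (etrans (card_imset _ perm_inj) cardAB).
by exists (tperm w z * s)%g; [apply: perm_onM | rewrite imset_permM].
Qed.

Lemma exists_perm_fixing_imset Z A B :
  #|A :&: Z| = #|B :&: Z| -> #|A :\: Z| = #|B :\: Z| ->
  exists2 t : {perm T}, t @: Z = Z & t @: A = B.
Proof.
move=> cardI cardD.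
have [t1 onZ t1I] := exists_perm_on_imset (subsetIr A Z) (subsetIr B Z) cardI.
have subC C : C :\: Z \subset ~: Z by rewrite setDE subsetIr.
have [t2 onC t2D] := exists_perm_on_imset (subC A) (subC B) cardD.
have ZC : Z \subset ~: ~: Z by rewrite setCK.
exists (t1 * t2)%g; first by rewrite imset_permM (im_perm_on onZ) (imset_perm_out onC ZC).
rewrite imset_permM -[A](setID A Z) imsetU t1I (imset_perm_out onZ) //.
by rewrite imsetU t2D (imset_perm_out onC) ?setID // (subset_trans (subsetIr _ _)).
Qed.
End PermImage.

Section Pairs.
Variable T : finType.
Implicit Types (W Z g h : {set T}) (s : {perm T}) (A : {set {set T}}).

Definition pairs_meeting Z (i : nat) : {set {set T}} :=
  [set g : {set T} | (#|g| == 2) && (#|g :&: Z| == i)].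

Lemma pairs_meetingP Z i g :
  reflect (#|g| = 2 /\ #|g :&: Z| = i) (g \in pairs_meeting Z i).
Proof. by rewrite inE; apply: (iffP andP) => -[/eqP-> /eqP->]. Qed.

Lemma imset_pairs_meeting s W Z i g :
  s @: W = Z -> g \in pairs_meeting W i -> s @: g \in pairs_meeting Z i.
Proof.
move=> <- /pairs_meetingP[g2 gW]; apply/pairs_meetingP.
rewrite -imsetI; last by move=> x y _ _; apply: perm_inj.
by rewrite !card_imset //; apply: perm_inj.
Qed.

Lemma pairs_meeting_trans Z i h1 h2 :
  h1 \in pairs_meeting Z i -> h2 \in pairs_meeting Z i ->
  exists2 t : {perm T}, t @: Z = Z & t @: h1 = h2.
Proof.
move=> /pairs_meetingP[c1 i1] /pairs_meetingP[c2 i2].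
by apply: exists_perm_fixing_imset; rewrite ?cardsD ?c1 ?c2 i1 i2.
Qed.

Lemma sum_pairs_meeting A Z (phi : {set T} -> nat) : {in A, forall g, #|g| = 2} ->
  \sum_(g in A) phi g = \sum_(g in A :&: pairs_meeting Z 0) phi g +
    \sum_(g in A :&: pairs_meeting Z 1) phi g + \sum_(g in A :&: pairs_meeting Z 2) phi g.
Proof.
move=> A2; rewrite [LHS](big_setID (pairs_meeting Z 0)) /=.
rewrite [X in _ + X](big_setID (pairs_meeting Z 1)) /= -!addnA.
congr (_ + (_ + _)); apply: eq_bigl => g; rewrite !inE.
  by case: (#|g :&: Z| =P 1) => [->|]; rewrite ?andbT ?andbF // andbC.
have [gA|] := boolP (g \in A); rewrite ?andbF //= A2 // eqxx /=.
by have := subset_leq_card (subsetIl g Z); rewrite (A2 g gA); lia.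
Qed.

Lemma card_pairs_meeting_split A Z : {in A, forall g, #|g| = 2} ->
  #|A| = #|A :&: pairs_meeting Z 0| + #|A :&: pairs_meeting Z 1| + #|A :&: pairs_meeting Z 2|.
Proof. by move=> A2; rewrite -!sum1_card; apply: sum_pairs_meeting. Qed.

Lemma pairs_meeting2E Z : pairs_meeting Z 2 = [set g : {set T} | g \subset Z & #|g| == 2].
Proof.
apply/setP => g; rewrite !inE; case: (#|g| =P 2) => [g2|]; rewrite ?andbF //= andbT.
by rewrite -g2 (subset_leqif_card (subsetIl g Z)).2 subsetI subxx.
Qed.

Lemma pairs_meeting0E Z : pairs_meeting Z 0 = pairs_meeting (~: Z) 2.
Proof.
apply/setP => g; rewrite !inE; case: eqP => //= g2.
by rewrite -setDE; have := cardsID Z g; rewrite g2; lia.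
Qed.

Lemma card_pairs_meeting2 Z : #|pairs_meeting Z 2| = 'C(#|Z|, 2).
Proof. by rewrite pairs_meeting2E cards_draws. Qed.

Lemma card_pairs_meeting0 Z : #|pairs_meeting Z 0| = 'C(#|~: Z|, 2).
Proof. by rewrite pairs_meeting0E card_pairs_meeting2. Qed.

Lemma card_pairs_meetingT Z :
  #|pairs_meeting [set: T] 2| =
  #|pairs_meeting Z 0| + #|pairs_meeting Z 1| + #|pairs_meeting Z 2|.
Proof.
have all2 : {in pairs_meeting [set: T] 2, forall g, #|g| = 2}.
  by move=> g /pairs_meetingP[].
have sub i : pairs_meeting Z i \subset pairs_meeting [set: T] 2.
  by apply/subsetP => g /pairs_meetingP[g2 _]; apply/pairs_meetingP; rewrite setIT.
by rewrite (card_pairs_meeting_split Z all2) !(setIidPr (sub _)).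
Qed.

Lemma card_pairs_meeting1 Z : #|pairs_meeting Z 1| = #|Z| * #|~: Z|.
Proof.
have := card_pairs_meetingT Z; rewrite card_pairs_meeting0 !card_pairs_meeting2 cardsT.
rewrite -(cardsC Z) -(Vandermonde _ _ 2) !big_ord_recr big_ord0 /= !bin1 subn0 subnn !bin0.
lia.
Qed.

Lemma graph_pairs_meetingT A i : {in A, forall g, #|g| = 2} ->
  A :&: pairs_meeting [set: T] i = if i == 2 then A else set0.
Proof.
move=> A2; apply/setP => g; rewrite in_setI.
have [gA|/negbTE gA] := boolP (g \in A); last by case: ifP; rewrite ?inE ?gA.
by rewrite inE setIT A2 // eqxx /= eq_sym; case: ifP; rewrite ?inE.
Qed.
End Pairs.

Lemma card_const_fibers (I J : finType) (A : {set I}) (f : I -> J) (Q : {set J}) c :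
  {in A, forall x, f x \in Q} -> {in Q, forall y, #|[set x in A | f x == y]| = c} ->
  #|A| = #|Q| * c.
Proof.
move=> fAQ fib; rewrite -sum1_card (partition_big f (mem Q)) //= -sum_nat_const.
by apply: eq_bigr => y yQ; rewrite -(fib y yQ) -sum1_card; apply: eq_bigl => x; rewrite inE.
Qed.

Section Averaging.
Variable T : finType.
Implicit Types (W Z g h : {set T}) (G : {set {set T}}).

Definition perms_onto W Z := [set s : {perm T} | s @: W == Z].

Lemma card_perms_onto_fiber W Z i g h1 h2 :
  h1 \in pairs_meeting Z i -> h2 \in pairs_meeting Z i ->
  #|[set s in perms_onto W Z | s @: g == h1]| = #|[set s in perms_onto W Z | s @: g == h2]|.
Proof.
move=> h1Z h2Z; have [t tZ th] := pairs_meeting_trans h1Z h2Z.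
rewrite -!sum1_card [RHS](reindex_inj (mulIg t)) /=; apply: eq_bigl => s.
by rewrite !inE !imset_permM -{2}tZ -th !(inj_eq (imset_inj perm_inj)).
Qed.

Lemma card_perms_onto_hits_eq W Z G i g1 g2 :
  g1 \in pairs_meeting W i -> g2 \in pairs_meeting W i ->
  #|[set s in perms_onto W Z | s @: g1 \in G]| = #|[set s in perms_onto W Z | s @: g2 \in G]|.
Proof.
move=> g1W g2W; have [t tW tg] := pairs_meeting_trans g1W g2W.
rewrite -!sum1_card [LHS](reindex_inj (mulgI t)) /=; apply: eq_bigl => s.
by rewrite !inE !imset_permM tW tg.
Qed.

Lemma card_perms_onto_hits W Z G i g : g \in pairs_meeting W i ->
  #|[set s in perms_onto W Z | s @: g \in G]| * #|pairs_meeting Z i| =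
  #|perms_onto W Z| * #|G :&: pairs_meeting Z i|.
Proof.
move=> gW; set P := pairs_meeting Z i.
have [P0|[h0 h0P]] := set_0Vmem P; first by rewrite P0 setI0 !cards0 !muln0.
pose c := #|[set s in perms_onto W Z | s @: g == h0]|.
have into s : s \in perms_onto W Z -> s @: g \in P.
  by rewrite inE => /eqP sW; apply: imset_pairs_meeting sW gW.
have -> : #|perms_onto W Z| = #|P| * c.
  apply: (card_const_fibers (f := fun s : {perm T} => s @: g)); first by move=> s /into.
  move=> h hP; rewrite (card_perms_onto_fiber _ _ hP h0P).
  by apply: eq_card => s; rewrite !inE.
have -> : #|[set s in perms_onto W Z | s @: g \in G]| = #|G :&: P| * c.
  apply: (card_const_fibers (f := fun s : {perm T} => s @: g)).
    by move=> s; rewrite inE => /andP[sC sG]; rewrite in_setI sG into.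
  move=> h /setIP[hG hP].
  rewrite /c -(card_perms_onto_fiber _ _ hP h0P); apply: eq_card => s; rewrite !inE.
  by case: (_ @: g =P h) => [->|]; rewrite ?hG ?andbF ?andbT.
lia.
Qed.
End Averaging.

Section Swap.
Variable T : finType.
Implicit Types (U E S g : {set T}) (F : {set {set T}}).

Definition edges_meeting F E := [set g in F | ~~ [disjoint g & E]].

Lemma pairs_meeting_swap U E g i : [disjoint g & E] -> (i <= 2)%N ->
  (g \in pairs_meeting (~: U :\: E) i) = (g \in pairs_meeting U (2 - i)).
Proof.
move=> gE i2; rewrite !inE; case: eqP => //= g2.
have -> : g :&: (~: U :\: E) = g :\: U.
  apply/setP => x; rewrite !inE andbC; case xg: (x \in g); rewrite ?andbF //=.
  by rewrite (disjointFr gE xg).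
by have := cardsID U g; have := subset_leq_card (subsetIl g U); rewrite g2; lia.
Qed.

Lemma exists_low_degree F S : {in F, forall g, #|g| = 2} -> (0 < #|S|)%N ->
  exists2 v, v \in S & (#|S| * #|[set g in F | v \in g]| <= 2 * #|F|)%N.
Proof.
move=> F2 /card_gt0P[v0 v0S].
have [v vS vmin] := arg_minnP (fun v => #|[set g in F | v \in g]|) v0S.
exists v => //; apply: leq_trans (_ : \sum_(u in S) #|[set g in F | u \in g]| <= _)%N.
  by rewrite -sum_nat_const; apply: leq_sum.
under eq_bigr do rewrite -sum1dep_card.
rewrite (exchange_big_dep (mem F)) /=; last by move=> u g _ /andP[].
rewrite mulnC -sum_nat_const; apply: leq_sum => g gF.
rewrite -(F2 g gF) sum1dep_card; apply: subset_leq_card; apply/subsetP => u.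
by rewrite !inE => /andP[_ /andP[]].
Qed.

Lemma exists_balancing_set F U : {in F, forall g, #|g| = 2} ->
  (#|U| <= #|~: U| <= #|U|.+1)%N ->
  exists2 E, #|~: U :\: E| = #|U| & (#|~: U| * #|edges_meeting F E| <= 2 * #|F|)%N.
Proof.
move=> F2 /andP[le1 le2]; have [eqUC|neUC] := eqVneq #|~: U| #|U|.
  exists set0; rewrite ?setD0 // (_ : edges_meeting F set0 = set0) ?cards0 ?muln0 //.
  apply/setP => g; rewrite !inE; case: (g \in F) => //=.
  by apply/negbF/pred0P => x; rewrite !inE andbF.
have ltUC : (#|U| < #|~: U|)%N by rewrite ltn_neqAle eq_sym neUC.
have [v vC vdeg] := exists_low_degree (S := ~: U) F2 (leq_ltn_trans (leq0n _) ltUC).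
exists [set v]; first by have := cardsD1 v (~: U); rewrite vC; lia.
rewrite (_ : edges_meeting F [set v] = [set g in F | v \in g]) //.
by apply/setP => g; rewrite !inE disjoint_sym disjoints1 negbK.
Qed.
End Swap.

Section RealArith.
Local Open Scope R_scope.

Lemma INR_bin2 n : INR 'C(n, 2) = INR n * (INR n - 1) / 2.
Proof.
elim: n => [|n IH]; first by rewrite /=; field.
by rewrite binS bin1 plus_INR IH S_INR; field.
Qed.

Lemma Rabs_perturb_sum3 (a0 a1 a2 b0 b1 b2 x0 x1 x2 y0 y1 y2 d : nat) (r0 r1 r2 : R) :
  (a0 + y0 = b0 + x0)%N -> (a1 + y1 = b1 + x1)%N -> (a2 + y2 = b2 + x2)%N ->
  (x0 + x1 + x2 = d)%N -> (y0 + y1 + y2 = d)%N ->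
  0 <= r0 <= 1 -> 0 <= r1 <= 1 -> 0 <= r2 <= 1 ->
  Rabs (INR a0 * r0 + INR a1 * r1 + INR a2 * r2 - (INR b0 * r0 + INR b1 * r1 + INR b2 * r2))
    <= INR d.
Proof.
move=> /(congr1 INR) e0 /(congr1 INR) e1 /(congr1 INR) e2 /(congr1 INR) ex /(congr1 INR) ey.
rewrite !plus_INR in e0 e1 e2 ex ey.
have := pos_INR x0; have := pos_INR x1; have := pos_INR x2.
have := pos_INR y0; have := pos_INR y1; have := pos_INR y2.
move=> *; split_Rabs; nra.
Qed.

Lemma Rabs_ge_sub (x y : R) : Rabs y - Rabs (x - y) <= Rabs x.
Proof. by split_Rabs; lra. Qed.

Lemma one_of_three_far (e d p q x0 x1 x2 eta g t : R) :
  0 < g -> 0 < t -> t <= Rabs d -> 2 * t <= e -> 4 * g <= Rabs p -> 10 * eta <= g * t ->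
  Rabs (x0 - e / 2 * (p + q)) <= 3 / 2 * eta ->
  Rabs ((x1 + x2) / 2 - (e / 2 * (p + q) + d * (p - q))) <= 2 * eta ->
  g * t / 2 <= Rabs x0 \/ g * t / 2 <= Rabs x1 \/ g * t / 2 <= Rabs x2.
Proof.
move=> g0 t0 td te gp ge near0 near12; have gt0 : 0 < g * t by nra.
have [small|big] := Rlt_le_dec (Rabs (p - q)) (Rabs p / 2).
  left; have pq : 3 / 2 * Rabs p <= Rabs (p + q).
    have := Rabs_triang (p + q) (p - q).
    by rewrite (_ : p + q + (p - q) = 2 * p) ?Rabs_mult ?(Rabs_pos_eq 2); lra.
  have mean : 6 * g * t <= Rabs (e / 2 * (p + q)).
    by rewrite Rabs_mult (Rabs_pos_eq (e / 2)); nra.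
  by have := Rabs_ge_sub x0 (e / 2 * (p + q)); lra.
(* Otherwise x0 and the mean of x1, x2 differ by about d (p - q), of size >= 2 g t. *)
have dpq : 2 * g * t <= Rabs (d * (p - q)) by rewrite Rabs_mult; nra.
have lower := Rabs_ge_sub (e / 2 * (p + q) + d * (p - q) - x0) (d * (p - q)).
rewrite (_ : _ - _ - d * (p - q) = - (x0 - e / 2 * (p + q))) ?Rabs_Ropp in lower; last by ring.
have upper : Rabs (e / 2 * (p + q) + d * (p - q) - x0) <=
    Rabs ((x1 + x2) / 2 - (e / 2 * (p + q) + d * (p - q))) + Rabs x1 / 2 + Rabs x2 / 2 + Rabs x0.
  by split_Rabs; lra.
have [|] := Rle_lt_dec (g * t / 2) (Rabs x0); first by left.
have [|] := Rle_lt_dec (g * t / 2) (Rabs x1); first by right; left.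
have [|] := Rle_lt_dec (g * t / 2) (Rabs x2); first by right; right.
lra.
Qed.

Lemma Rabs_div_pos (x y : R) : 0 < y -> Rabs (x / y) = Rabs x / y.
Proof. by move=> y0; rewrite /Rdiv Rabs_mult Rabs_inv (Rabs_pos_eq y) //; lra. Qed.

Lemma mixture_near_mean (k l u0 u1 u2 : R) : 1 <= k -> l = k \/ l = k + 1 ->
  Rabs u0 <= 1 / 2 -> Rabs u1 <= 1 / 2 -> Rabs u2 <= 1 / 2 ->
  (k + l) * Rabs ((l * (l - 1) / 2 * u0 + k * l * u1 + k * (k - 1) / 2 * u2) /
          (l * (l - 1) / 2 + k * l + k * (k - 1) / 2) - (u1 + (u0 + u2) / 2) / 2)
    <= 3 / 2.
Proof.
move=> k1 [->|->] b0 b1 b2.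
  rewrite (_ : _ - _ = (u1 - (u0 + u2) / 2) / (2 * (2 * k - 1))); last first.
    by field; split; apply: Rgt_not_eq; nra.
  have pos : 0 < 2 * (2 * k - 1) by lra.
  have num : Rabs (u1 - (u0 + u2) / 2) <= 1 by split_Rabs; lra.
  rewrite Rabs_div_pos // /Rdiv.
  have := Rinv_r _ (Rgt_not_eq _ _ pos); have := Rinv_0_lt_compat _ pos; nra.
rewrite (_ : _ - _ = (u1 - (u0 + u2) / 2 + u0 - u2) / (2 * (2 * k + 1))); last first.
  by field; split; apply: Rgt_not_eq; nra.
have pos : 0 < 2 * (2 * k + 1) by lra.
have num : Rabs (u1 - (u0 + u2) / 2 + u0 - u2) <= 2 by split_Rabs; lra.
rewrite Rabs_div_pos // /Rdiv.
have := Rinv_r _ (Rgt_not_eq _ _ pos); have := Rinv_0_lt_compat _ pos; nra.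
Qed.

Lemma one_of_three_means_far (f0 f1 f2 r0 r1 r2 k l t g D B0 B1 B2 : R) :
  0 <= f0 -> 0 <= f1 -> 0 <= f2 -> 0 <= r0 <= 1 -> 0 <= r1 <= 1 -> 0 <= r2 <= 1 ->
  1 <= k -> l = k \/ l = k + 1 -> 0 < t -> 0 < g ->
  t <= Rabs (f1 - (f0 + f1 + f2) / 2) ->
  g * (k + l) ^ 2 <= Rabs (k * l * r1 - / 2 * k * l) ->
  10 * (f0 + f1 + f2) / (k + l) <= g * t ->
  B0 = (f0 + f1 + f2) * (l * (l - 1) / 2 * r0 + k * l * r1 + k * (k - 1) / 2 * r2) /
         (l * (l - 1) / 2 + k * l + k * (k - 1) / 2) ->
  B1 = f0 * r0 + f1 * r1 + f2 * r2 ->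
  Rabs (B2 - (f2 * r0 + f1 * r1 + f0 * r2)) <= D -> (k + l) * D <= 4 * (f0 + f1 + f2) ->
  g * t / 2 <= Rabs (B0 - (f0 + f1 + f2) / 2) \/ g * t / 2 <= Rabs (B1 - (f0 + f1 + f2) / 2) \/
  g * t / 2 <= Rabs (B2 - (f0 + f1 + f2) / 2).
Proof.
move=> f0p f1p f2p r0b r1b r2b k1 kl t0 g0 devF devG sparse B0E B1E B2near Dsmall.
have n0 : 0 < k + l by case: kl; lra.
pose e := f0 + f1 + f2; pose eta := e / (k + l).
have etaE : e = (k + l) * eta by rewrite /eta; field; apply: Rgt_not_eq.
have eta0 : 0 <= eta by move: etaE; rewrite /e; nra.
have p4g : 4 * g <= Rabs (r1 - 1 / 2).
  move: devG; rewrite (_ : _ - _ = (k * l) * (r1 - 1 / 2)); last by field.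
  have kl0 : 0 < k * l by nra.
  have : 4 * (k * l) <= (k + l) ^ 2 by nra.
  rewrite Rabs_mult (Rabs_pos_eq (k * l)); nra.
apply: (one_of_three_far (e := e) (q := ((r0 - 1 / 2) + (r2 - 1 / 2)) / 2) (eta := eta)
  g0 t0 devF _ p4g).
- by move: devF; rewrite /e; split_Rabs; lra.
- by move: sparse; rewrite /eta /Rdiv Rmult_assoc.
- have bnd u : 0 <= u <= 1 -> Rabs (u - 1 / 2) <= 1 / 2 by move=> ?; split_Rabs; lra.
  have := mixture_near_mean k1 kl (bnd _ r0b) (bnd _ r1b) (bnd _ r2b).
  set N := l * (l - 1) / 2 + k * l + k * (k - 1) / 2.
  have N0 : 0 < N by rewrite /N; nra.
  set M := _ / N => mix.
  rewrite (_ : B0 - _ - _ = e * (M - (r1 - 1 / 2 + (r0 - 1 / 2 + (r2 - 1 / 2)) / 2) / 2)).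
    by rewrite Rabs_mult (Rabs_pos_eq e) ?etaE; nra.
  by rewrite B0E /M /N /e; field; apply: Rgt_not_eq; nra.
- rewrite (_ : (B1 - e / 2 + (B2 - e / 2)) / 2 - _ =
      (B2 - (f2 * r0 + f1 * r1 + f0 * r2)) / 2); last by rewrite B1E /e; field.
  rewrite Rabs_div_pos; last lra.
  by move: etaE; rewrite /e => etaE; nra.
Qed.
End RealArith.

Section MeanHits.
Variable T : finType.
Implicit Types (U E W X Z g : {set T}) (s : {perm T}) (F G O : {set {set T}}).
Local Open Scope R_scope.

(* For empty O this divides by 0, so dens G O = 0; [dens_mul] holds regardless. *)
Definition dens G O : R := INR #|G :&: O| / INR #|O|.

Lemma dens_mul G O : INR #|G :&: O| = INR #|O| * dens G O.
Proof.
rewrite /dens; have [O0|Opos] := posnP #|O|.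
  have := subset_leq_card (subsetIr G O); rewrite O0 leqn0 => /eqP->; simpl; ring.
by field; apply: not_0_INR; lia.
Qed.

Lemma dens_bounds G O : 0 <= dens G O <= 1.
Proof.
have [O0|Opos] := posnP #|O|.
  by rewrite /dens O0 /Rdiv /= Rinv_0 Rmult_0_r; lra.
have Ogt0 : 0 < INR #|O| by apply: lt_0_INR; lia.
have GO : INR #|G :&: O| <= INR #|O| by apply: le_INR; apply/leP/subset_leq_card/subsetIr.
have := pos_INR #|G :&: O|; rewrite dens_mul in GO * => ?; nra.
Qed.

Definition hits F G s : nat := #|[set e in F | s @: e \in G]|.

Lemma card_perm_copy_meet F G s : #|[set s @: e | e : {set T} in F] :&: G| = hits F G s.
Proof.
rewrite /hits -[RHS](card_imset _ (imset_inj (@perm_inj _ s))); apply: eq_card => h.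
rewrite in_setI; apply/idP/idP => [/andP[/imsetP[e eF ->] eG]|/imsetP[e]].
  by apply/imsetP; exists e; rewrite // inE eF.
by rewrite inE => /andP[eF eG] ->; rewrite eG imset_f.
Qed.

Definition mean_hits F G W Z : R :=
  INR #|F :&: pairs_meeting W 0| * dens G (pairs_meeting Z 0) +
  INR #|F :&: pairs_meeting W 1| * dens G (pairs_meeting Z 1) +
  INR #|F :&: pairs_meeting W 2| * dens G (pairs_meeting Z 2).

Lemma mean_hits_setT F G X :
  {in F, forall g : {set T}, #|g| = 2%N} -> {in G, forall g : {set T}, #|g| = 2%N} ->
  mean_hits F G [set: T] [set: T] =
  INR #|F| * (INR #|pairs_meeting X 0| * dens G (pairs_meeting X 0) +
              INR #|pairs_meeting X 1| * dens G (pairs_meeting X 1) +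
              INR #|pairs_meeting X 2| * dens G (pairs_meeting X 2)) /
   (INR #|pairs_meeting X 0| + INR #|pairs_meeting X 1| + INR #|pairs_meeting X 2|).
Proof.
move=> F2 G2; rewrite /mean_hits /dens !graph_pairs_meetingT //= cards0 /=.
rewrite -!dens_mul -!plus_INR !plusE -card_pairs_meetingT -(card_pairs_meeting_split X G2) /Rdiv.
by rewrite !Rmult_0_l !Rplus_0_l Rmult_assoc.
Qed.

Lemma INR_card_perms_onto_hits W Z G i g : g \in pairs_meeting W i ->
  INR #|[set s in perms_onto W Z | s @: g \in G]| =
  INR #|perms_onto W Z| * dens G (pairs_meeting Z i).
Proof.
move=> gW; have := card_perms_onto_hits Z G gW.
have [P0|Ppos] := posnP #|pairs_meeting Z i|; last first.
  move/(congr1 INR); rewrite !mult_INR dens_mul => e.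
  apply: (Rmult_eq_reg_r (INR #|pairs_meeting Z i|)); first by rewrite e; ring.
  by apply: not_0_INR; lia.
have C0 : perms_onto W Z = set0.
  apply/setP => s; rewrite !inE; apply/negP => /eqP sW.
  by have := imset_pairs_meeting sW gW; rewrite (cards0_eq P0) inE.
by rewrite C0 (eq_card0 (A := [set s in _ | _])) ?cards0 /= ?Rmult_0_l // => s; rewrite !inE.
Qed.

Lemma sum_hits F G W Z : {in F, forall e : {set T}, #|e| = 2%N} ->
  INR (\sum_(s in perms_onto W Z) hits F G s) = INR #|perms_onto W Z| * mean_hits F G W Z.
Proof.
move=> F2; set C := perms_onto W Z.
have -> : \sum_(s in C) hits F G s = \sum_(e in F) #|[set s in C | s @: e \in G]|.
  rewrite /hits; under eq_bigr do rewrite -sum1dep_card.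
  rewrite (exchange_big_dep (mem F)) /=; last by move=> s e _ /andP[].
  by apply: eq_bigr => e eF; rewrite sum1dep_card; apply: eq_card => s; rewrite !inE eF.
have class i : INR (\sum_(e in F :&: pairs_meeting W i) #|[set s in C | s @: e \in G]|) =
    INR #|F :&: pairs_meeting W i| * (INR #|C| * dens G (pairs_meeting Z i)).
  have [->|[e0 /setIP[_ e0W]]] := set_0Vmem (F :&: pairs_meeting W i).
    by rewrite big_set0 cards0 /=; ring.
  rewrite (eq_bigr (fun _ => #|[set s in C | s @: e0 \in G]|)).
    by rewrite sum_nat_const mult_INR (INR_card_perms_onto_hits _ _ e0W).
  by move=> e /setIP[_ eW]; apply: card_perms_onto_hits_eq eW e0W.
by rewrite (sum_pairs_meeting W _ F2) !plus_INR !class /mean_hits; ring.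
Qed.

Lemma exists_hits_far F G W Z (r c : R) :
  {in F, forall e : {set T}, #|e| = 2%N} -> #|W| = #|Z| ->
  r <= Rabs (mean_hits F G W Z - c) -> exists s, r <= Rabs (INR (hits F G s) - c).
Proof.
move=> F2 WZ dev; set C := perms_onto W Z.
have [s0 _ s0W] := exists_perm_on_imset (subsetT W) (subsetT Z) WZ.
have s0C : s0 \in C by rewrite inE s0W.
have Cpos : 0 < INR #|C| by apply: lt_0_INR; apply/ltP/card_gt0P; exists s0.
have mean := sum_hits G W Z F2.
have [le|lt] := Rle_lt_dec c (mean_hits F G W Z).
  have [s _ smax] := arg_maxnP (hits F G) s0C; exists s.
  have : (\sum_(s' in C) hits F G s' <= #|C| * hits F G s)%N.
    by rewrite -sum_nat_const; apply: leq_sum.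
  move/leP/le_INR; rewrite mult_INR mean => /(Rmult_le_reg_l _ _ _ Cpos) ?.
  by move: dev; split_Rabs; lra.
have [s _ smin] := arg_minnP (hits F G) s0C; exists s.
have : (#|C| * hits F G s <= \sum_(s' in C) hits F G s')%N.
  by rewrite -sum_nat_const; apply: leq_sum.
move/leP/le_INR; rewrite mult_INR mean => /(Rmult_le_reg_l _ _ _ Cpos) ?.
by move: dev; split_Rabs; lra.
Qed.

Lemma mean_hits_swap F G U E Z : {in F, forall g, #|g| = 2%N} ->
  Rabs (mean_hits F G (~: U :\: E) Z -
    (INR #|F :&: pairs_meeting U 2| * dens G (pairs_meeting Z 0) +
     INR #|F :&: pairs_meeting U 1| * dens G (pairs_meeting Z 1) +
     INR #|F :&: pairs_meeting U 0| * dens G (pairs_meeting Z 2)))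
  <= INR #|edges_meeting F E|.
Proof.
move=> F2; set D := edges_meeting F E; set U' := ~: U :\: E.
have DF : D \subset F by apply/subsetP => g; rewrite inE => /andP[].
have D2 : {in D, forall g : {set T}, #|g| = 2%N} by move=> g /(subsetP DF)/F2.
have split i : (i <= 2)%N -> (#|F :&: pairs_meeting U' i| + #|D :&: pairs_meeting U (2 - i)| =
    #|F :&: pairs_meeting U (2 - i)| + #|D :&: pairs_meeting U' i|)%N.
  move=> i2; rewrite -(cardsID D (F :&: pairs_meeting U' i)).
  rewrite -(cardsID D (F :&: pairs_meeting U (2 - i))) !(setIC (F :&: _)) !setIA (setIidPl DF).
  suff -> : F :&: pairs_meeting U' i :\: D = F :&: pairs_meeting U (2 - i) :\: D by lia.
  apply/setP => g; rewrite !in_setD !in_setI [g \in D]inE.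
  case: (g \in F); rewrite ?andbF //=; case: (boolP [disjoint g & E]) => //= gE.
  by rewrite pairs_meeting_swap.
rewrite /mean_hits; apply: Rabs_perturb_sum3 (split 0%N _) (split 1%N _) (split 2%N _) _ _ _ _ _ => //.
- by rewrite -(card_pairs_meeting_split U' D2).
- by rewrite (card_pairs_meeting_split U D2) subn0 subnn subSnn; lia.
all: exact: dens_bounds.
Qed.
End MeanHits.

Section DeviatingMean.
Variable T : finType.
Implicit Types (U X : {set T}) (F G : {set {set T}}).
Local Open Scope R_scope.

Lemma exists_far_mean_hits F G U X (t g : R) :
  {in F, forall e : {set T}, #|e| = 2%N} -> {in G, forall e : {set T}, #|e| = 2%N} ->
  #|U| = #|X| -> (0 < #|U|)%N -> (#|U| <= #|~: U| <= #|U|.+1)%N -> 0 < t -> 0 < g ->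
  t <= Rabs (INR #|F :&: pairs_meeting U 1| - INR #|F| / 2) ->
  g * INR #|T| ^ 2 <= Rabs (INR #|G :&: pairs_meeting X 1| - / 2 * INR #|X| * INR #|~: X|) ->
  10 * INR #|F| / INR #|T| <= g * t ->
  exists W Z : {set T}, #|W| = #|Z| /\ g * t / 2 <= Rabs (mean_hits F G W Z - INR #|F| / 2).
Proof.
move=> F2 G2 UX U0 Ubal t0 g0 devF devG sparse.
have CUX : #|~: U| = #|~: X| by apply/eqP; rewrite -(eqn_add2l #|U|) {2}UX !cardsC.
have [E UE Edeg] := exists_balancing_set F2 Ubal.
have nT : INR #|T| = INR #|X| + INR #|~: X| by rewrite -plus_INR plusE cardsC.
have k1 : 1 <= INR #|X| by apply: (le_INR 1); apply/leP; rewrite -UX.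
have kl : INR #|~: X| = INR #|X| \/ INR #|~: X| = INR #|X| + 1.
  rewrite -CUX -UX -S_INR; case/andP: Ubal; rewrite leq_eqVlt => /orP[/eqP<-|]; first by left.
  by move=> lt le; right; congr INR; apply/eqP; rewrite eqn_leq le.
have D4 : INR #|T| * INR #|edges_meeting F E| <= 4 * INR #|F|.
  have : (#|T| * #|edges_meeting F E| <= 4 * #|F|)%N.
    by move: Edeg Ubal; rewrite -(cardsC U); nia.
  by move/leP/le_INR; rewrite !mult_INR /=; lra.
have eF := congr1 INR (card_pairs_meeting_split U F2); rewrite !plus_INR in eF.
have c0 : INR #|pairs_meeting X 0| = INR #|~: X| * (INR #|~: X| - 1) / 2.
  by rewrite card_pairs_meeting0 INR_bin2.
have c1 : INR #|pairs_meeting X 1| = INR #|X| * INR #|~: X|.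
  by rewrite card_pairs_meeting1 mult_INR.
have c2 : INR #|pairs_meeting X 2| = INR #|X| * (INR #|X| - 1) / 2.
  by rewrite card_pairs_meeting2 INR_bin2.
have B0E := mean_hits_setT X F2 G2; rewrite c0 c1 c2 eF in B0E.
rewrite eF in devF; rewrite nT eF in sparse D4; rewrite nT dens_mul c1 in devG.
have [far|[far|far]] := one_of_three_means_far (pos_INR _) (pos_INR _) (pos_INR _)
  (dens_bounds _ _) (dens_bounds _ _) (dens_bounds _ _) k1 kl t0 g0 devF devG sparse B0E
  (erefl (mean_hits F G U X)) (mean_hits_swap G U E X F2) D4; rewrite -eF in far.
- by exists [set: T], [set: T].
- by exists U, X.
- by exists (~: U :\: E), X; rewrite UE UX.
Qed.
End DeviatingMean.

Lemma eUV_pairs_meeting n (F : {set {set 'I_n}}) (U : {set 'I_n}) :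
  eUV F U (~: U) = #|F :&: pairs_meeting U 1|.
Proof.
apply: eq_card => g; rewrite !inE; case: (g \in F) => //=; apply/idP/idP.
  case/exists_inP => x xU /exists_inP[y]; rewrite inE => yU /eqP->.
  have xy : x != y by apply: contraNneq yU => <-.
  rewrite cards2 xy (_ : [set x; y] :&: U = [set x]) ?cards1 //.
  apply/setP => z; rewrite !inE; have [->|_] := eqVneq z x; first by rewrite xU.
  by have [->|] := eqVneq z y; rewrite ?(negbTE yU) ?andbF.
case/andP => /cards2P[a [b [ab ->]]] /cards1P[x eab].
have inI y : (y \in [set a; b]) && (y \in U) = (y == x) by rewrite -in_setI eab inE.
have := inI x; rewrite eqxx => /andP[/set2P[] xab xU]; subst x; apply/exists_inP.
  exists a; first exact: xU.
  apply/exists_inP; exists b; last exact: eqxx.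
  by have := inI b; rewrite set22 eq_sym (negbTE ab) /= inE => ->.
exists b; first exact: xU.
apply/exists_inP; exists a; last by rewrite setUC.
by have := inI a; rewrite set21 (negbTE ab) /= inE => ->.
Qed.

Lemma card_half_complement n (U : {set 'I_n}) :
  #|U| = n./2 -> (#|U| <= #|~: U| <= #|U|.+1)%N.
Proof.
by move=> cardU; have := cardsC U; have := odd_double_half n; rewrite card_ord cardU; lia.
Qed.

Open Scope R_scope.

Theorem lemma2p1 :
  exists n0 : nat, forall n : nat, (n0 <= n)%N ->
  forall (t : R) (F : {set {set 'I_n}}),
    1 <= t -> is_graph F ->
    (exists U : {set 'I_n}, #|U| = n./2 /\
       Rabs (INR (eUV F U (~: U)) - INR #|F| / 2) >= t) ->
  forall (gamma : R) (G : {set {set 'I_n}}),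
    0 < gamma < 1 -> is_graph G ->
    (exists X : {set 'I_n}, #|X| = n./2 /\
       Rabs (INR (eUV G X (~: X)) - / 2 * INR #|X| * INR #|~: X|)
         >= gamma * INR n ^ 2) ->
    gamma * t >= 10 * INR #|F| / INR n ->
    exists F0 : {set {set 'I_n}}, is_copy F F0 /\
      Rabs (INR #|F0 :&: G| - INR #|F| / 2) >= gamma * t / 2.
Proof.
exists 2%N => n n2 t F t1 F2 [U [cardU devF]] gamma G [gamma0 _] G2 [X [cardX devG]] sparse.
rewrite eUV_pairs_meeting in devF; rewrite eUV_pairs_meeting in devG.
have devG' : gamma * INR #|'I_n| ^ 2 <= Rabs (INR #|G :&: pairs_meeting X 1| -
    / 2 * INR #|X| * INR #|~: X|) by rewrite card_ord; apply: Rge_le.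
have sparse' : 10 * INR #|F| / INR #|'I_n| <= gamma * t by rewrite card_ord; apply: Rge_le.
have U0 : (0 < #|U|)%N by rewrite cardU; have := odd_double_half n; lia.
have [W [Z [WZ far]]] := exists_far_mean_hits F2 G2 (etrans cardU (esym cardX)) U0
  (card_half_complement cardU) (Rlt_le_trans _ _ _ Rlt_0_1 t1) gamma0
  (Rge_le _ _ devF) devG' sparse'.
have [s hits_far] := exists_hits_far F2 WZ far.
exists [set s @: e | e : {set 'I_n} in F]; split; first by exists s.
by rewrite card_perm_copy_meet; apply: Rle_ge.
Qed.
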